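(* Let $Z$ be a fat point scheme in $\mathbb{P}^1\times\mathbb{P}^1$. Then $\alpha_Z^*\unrhd\beta_Z$.
   Context: $\mathbf{k}$ algebraically closed; a fat point scheme $Z$ in $\mathbb{P}^1\times\mathbb{P}^1$ is given by distinct points with positive multiplicities. With $\pi_1(\mathrm{Supp}\,Z)=\{R_1,\dots,R_r\}$, $\pi_2(\mathrm{Supp}\,Z)=\{Q_1,\dots,Q_t\}$ and $m_{ij}$ the multiplicity of $R_i\times Q_j$ ($0$ if absent): $l_i=\max_j m_{ij}$, $a_{i,k}=\sum_j(m_{ij}-k)_+$ ($0\le k\le l_i-1$), $\alpha_Z$ = all $a_{i,k}$ in non-increasing order; $l'_j=\max_i m_{ij}$, $b_{j,k}=\sum_i(m_{ij}-k)_+$ ($0\le k\le l'_j-1$), $\beta_Z$ = all $b_{j,k}$ in non-increasing order; $(n)_+=\max\{0,n\}$. Both are partitions of $\sum\binom{m_i+1}{2}$. The conjugate of a partition $\lambda=(\lambda_1\ge\dots\ge\lambda_n)$ is $\lambda^*=(\lambda^*_1,\dots,\lambda^*_{\lambda_1})$ with $\lambda^*_i=\#\{j:\lambda_j\ge i\}$. For partitions $\lambda,\delta$ of the same integer (the shorter padded with zeros), $\lambda\unrhd\delta$ means $\lambda_1+\dots+\lambda_i\ge\delta_1+\dots+\delta_i$ for all $i$. *)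

From mathcomp Require Import all_boot all_order all_algebra.
Set Implicit Arguments. Unset Strict Implicit. Unset Printing Implicit Defensive.

(* A point of P^1 over k, in normalized homogeneous coordinates:
   [Some x] = [1 : x], [None] = [0 : 1].  This is a bijection with P^1(k). *)
Definition P1 (k : closedFieldType) := option k.

Definition fat_point_scheme (k : closedFieldType) (Z : seq ((P1 k * P1 k) * nat)) : Prop :=
  uniq (map fst Z) /\ all (fun p => 0 < p.2) Z.

Section FatPoints.
Variable k : closedFieldType.
Variable Z : seq ((P1 k * P1 k) * nat).

Definition Rs : seq (P1 k) := undup [seq p.1.1 | p <- Z].
Definition Qs : seq (P1 k) := undup [seq p.1.2 | p <- Z].

Definition mult (R Q : P1 k) : nat := \sum_(p <- Z | p.1 == (R, Q)) p.2.

Definition lrow (R : P1 k) : nat := \max_(Q <- Qs) mult R Q.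
Definition lcol (Q : P1 k) : nat := \max_(R <- Rs) mult R Q.

(* a_{i,k} = sum_j (m_ij - k)_+ ; truncated nat subtraction is (.)_+ *)
Definition a_entry (R : P1 k) (c : nat) : nat := \sum_(Q <- Qs) (mult R Q - c).
Definition b_entry (Q : P1 k) (c : nat) : nat := \sum_(R <- Rs) (mult R Q - c).

Definition alpha : seq nat :=
  sort geq (flatten [seq [seq a_entry R c | c <- iota 0 (lrow R)] | R <- Rs]).
Definition beta : seq nat :=
  sort geq (flatten [seq [seq b_entry Q c | c <- iota 0 (lcol Q)] | Q <- Qs]).
End FatPoints.

Definition conj_part (l : seq nat) : seq nat :=
  [seq count (fun x => i <= x) l | i <- iota 1 (\max_(x <- l) x)].

(* dominance order (shorter sequence padded with zeros) *)
Definition dominates (l d : seq nat) : Prop :=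
  forall i, sumn (take i d) <= sumn (take i l).

From mathcomp Require Import all_boot all_order all_algebra.
Set Implicit Arguments. Unset Strict Implicit. Unset Printing Implicit Defensive.

(* Index rows by the cells (R_i, c) with c < l_i and columns by the cells
   (Q_j, d) with d < l'_j, and join (R_i, c) to (Q_j, d) iff c + d < m_ij.
   Since (m_ij - c)_+ = #{d : c + d < m_ij}, the row sums of this 0/1 matrix
   are the a_{i,c} and its column sums are the b_{j,d}.  For any 0/1 matrix,
   n columns meet row r in at most min (row sum of r, n) entries, so the n
   largest column sums add up to at most sum_r min (row sum of r, n), which is
   the sum of the first n parts of the conjugate of the row-sum partition
   (the easy half of the Gale-Ryser theorem). *)

Lemma sum_iota_addn_ltn (c m L : nat) :
  \sum_(d <- iota 0 L) (c + d < m) = minn L (m - c).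
Proof.
elim: L => [|L IHL]; first by rewrite big_nil min0n.
rewrite -addn1 iotaD big_cat big_seq1 /= IHL add0n.
case: (ltnP (c + L) m) => [cLm | mcL] /=.
- have lt_L : L < m - c by rewrite ltn_subRL.
  by rewrite (minn_idPl (ltnW lt_L)) addn1; apply/esym/minn_idPl.
- have le_mc : m - c <= L by rewrite leq_subLR.
  rewrite (minn_idPr le_mc) addn0; apply/esym/minn_idPr.
  by rewrite addn1 (leq_trans le_mc).
Qed.

Lemma sumn_take_conj_part (l : seq nat) (n : nat) :
  sumn (take n (conj_part l)) = \sum_(x <- l) minn x n.
Proof.
rewrite /conj_part -map_take take_iota sumnE big_map.
set M := \max_(x <- l) x.
have le_M x : x \in l -> x <= M by move=> xl; exact: leq_bigmax_seq.
transitivity (\sum_(i <- iota 1 (minn n M)) \sum_(x <- l) (i <= x)).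
  by apply: eq_bigr => i _; rewrite -sum1_count big_mkcond.
rewrite exchange_big /= big_seq [RHS]big_seq; apply: eq_bigr => x xl.
rewrite (iotaDl 1 0) big_map.
rewrite (eq_bigr (fun j => (0 + j < x) : nat)) // sum_iota_addn_ltn subn0.
by rewrite -minnA (minn_idPr (le_M x xl)) minnC.
Qed.

Lemma sorted_row_sums_conj_dominates_col_sums
    (I J : eqType) (E : I -> J -> bool) (rs : seq I) (cs : seq J) :
  dominates (conj_part (sort geq [seq \sum_(c <- cs) E r c | r <- rs]))
            (sort geq [seq \sum_(r <- rs) E r c | c <- cs]).
Proof.
move=> n; rewrite sumn_take_conj_part (perm_big _ (permEl (perm_sort _ _))).
rewrite big_map sort_map -map_take sumnE big_map exchange_big /=.
set cs' := sort _ cs; have perm_cs : perm_eq cs cs' by rewrite perm_sym perm_sort.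
apply: leq_sum => r _; rewrite leq_min; apply/andP; split.
- rewrite (perm_big cs' perm_cs) -[in X in _ <= X](cat_take_drop n cs').
  by rewrite big_cat leq_addr.
- rewrite (leq_trans _ (geq_minl n (size cs'))) // -size_take_min -sum1_size.
  by rewrite leq_sum // => c _; exact: leq_b1.
Qed.

Section FatPointIncidence.
Variables (k : closedFieldType) (Z : seq ((P1 k * P1 k) * nat)).

Definition row_cells : seq (P1 k * nat) :=
  flatten [seq [seq (R, c) | c <- iota 0 (lrow Z R)] | R <- Rs Z].
Definition col_cells : seq (P1 k * nat) :=
  flatten [seq [seq (Q, d) | d <- iota 0 (lcol Z Q)] | Q <- Qs Z].

Definition cell_incidence (r s : P1 k * nat) : bool := r.2 + s.2 < mult Z r.1 s.1.

Lemma mult_eq0 R Q : (R \notin Rs Z) || (Q \notin Qs Z) -> mult Z R Q = 0.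
Proof.
move=> out_RQ; rewrite /mult big_seq_cond big1 // => p /andP [pZ /eqP p1E].
move: out_RQ; rewrite /Rs /Qs !mem_undup.
have -> : R \in [seq p.1.1 | p <- Z] by apply/mapP; exists p => //; rewrite p1E.
by have -> : Q \in [seq p.1.2 | p <- Z] by apply/mapP; exists p => //; rewrite p1E.
Qed.

Lemma mult_le_lrow R Q : mult Z R Q <= lrow Z R.
Proof.
have [QQ | QnQ] := boolP (Q \in Qs Z); last by rewrite mult_eq0 ?QnQ ?orbT.
exact: (@leq_bigmax_seq _ _ xpredT (fun Q => mult Z R Q) Q QQ).
Qed.

Lemma mult_le_lcol R Q : mult Z R Q <= lcol Z Q.
Proof.
have [RR | RnR] := boolP (R \in Rs Z); last by rewrite mult_eq0 ?RnR.
exact: (@leq_bigmax_seq _ _ xpredT (fun R => mult Z R Q) R RR).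
Qed.

Lemma a_entry_row_sum r : a_entry Z r.1 r.2 = \sum_(s <- col_cells) cell_incidence r s.
Proof.
rewrite /col_cells big_flatten big_map /a_entry; apply: eq_bigr => Q _.
rewrite big_map /cell_incidence /= sum_iota_addn_ltn; apply/esym/minn_idPr.
exact: leq_trans (leq_subr _ _) (mult_le_lcol _ _).
Qed.

Lemma b_entry_col_sum s : b_entry Z s.1 s.2 = \sum_(r <- row_cells) cell_incidence r s.
Proof.
rewrite /row_cells big_flatten big_map /b_entry; apply: eq_bigr => R _.
rewrite big_map /cell_incidence /=.
under eq_bigr do rewrite addnC.
rewrite sum_iota_addn_ltn; apply/esym/minn_idPr.
exact: leq_trans (leq_subr _ _) (mult_le_lrow _ _).
Qed.

Lemma alpha_row_sums :
  alpha Z = sort geq [seq \sum_(s <- col_cells) cell_incidence r s | r <- row_cells].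
Proof.
rewrite /alpha /row_cells map_flatten -map_comp; congr (sort _ (flatten _)).
apply: eq_map => R /=; rewrite -map_comp.
by apply: eq_map => c; rewrite /= -a_entry_row_sum.
Qed.

Lemma beta_col_sums :
  beta Z = sort geq [seq \sum_(r <- row_cells) cell_incidence r s | s <- col_cells].
Proof.
rewrite /beta /col_cells map_flatten -map_comp; congr (sort _ (flatten _)).
apply: eq_map => Q /=; rewrite -map_comp.
by apply: eq_map => d; rewrite /= -b_entry_col_sum.
Qed.

End FatPointIncidence.

Theorem theorem3p16 (k : closedFieldType) (Z : seq ((P1 k * P1 k) * nat)) :
  fat_point_scheme Z -> dominates (conj_part (alpha Z)) (beta Z).
Proof.
move=> _; rewrite alpha_row_sums beta_col_sums.
exact: sorted_row_sums_conj_dominates_col_sums.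
Qed.
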